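(* Let $g:(0,\infty)\times[0,\infty)\to\mathbb{R}$ be non-decreasing in the second variable, and assume that for some $t_0$, $S=\sup_{t>t_0,\,h,k>0}|g(t,h+k)-g(t+h,k)-g(t,h)|<\infty$. Then: (i) the quantities $\limsup_{t\to\infty}\frac{g(t,h)}{h}$ and $\liminf_{t\to\infty}\frac{g(t,h)}{h}$ have limits as $h\to\infty$; (ii) $\displaystyle\lim_{t\to\infty}\limsup_{h\to\infty}\frac{g(t,h)}{h}\le\lim_{h\to\infty}\limsup_{t\to\infty}\frac{g(t,h)}{h}$ and $\displaystyle\lim_{t\to\infty}\liminf_{h\to\infty}\frac{g(t,h)}{h}\ge\lim_{h\to\infty}\liminf_{t\to\infty}\frac{g(t,h)}{h}$; (iii) $\lim_{h\to\infty}\limsup_{t\to\infty}\frac{g(t,h)}{h}$ is infinite if and only if $\limsup_{t\to\infty}g(t,h)$ is infinite for one (equivalently, for every) $h>0$. *)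

From HB Require Import structures.
From mathcomp Require Import all_boot all_order all_algebra.
From mathcomp Require Import all_classical all_reals all_analysis.
Set Implicit Arguments. Unset Strict Implicit. Unset Printing Implicit Defensive.
Import Order.TTheory GRing.Theory Num.Theory.
Local Open Scope ring_scope.
Local Open Scope ereal_scope.

Definition limsup_t_ratio (R : realType) (g : R -> R -> R) (h : R) : \bar R :=
  @limf_esup R R^o R (fun t : R => (g t h / h)%:E) (pinfty_nbhs R).
Definition liminf_t_ratio (R : realType) (g : R -> R -> R) (h : R) : \bar R :=
  @limf_einf R R^o R (fun t : R => (g t h / h)%:E) (pinfty_nbhs R).
Definition limsup_h_ratio (R : realType) (g : R -> R -> R) (t : R) : \bar R :=
  @limf_esup R R^o R (fun h : R => (g t h / h)%:E) (pinfty_nbhs R).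
Definition liminf_h_ratio (R : realType) (g : R -> R -> R) (t : R) : \bar R :=
  @limf_einf R R^o R (fun h : R => (g t h / h)%:E) (pinfty_nbhs R).
Definition limsup_t (R : realType) (g : R -> R -> R) (h : R) : \bar R :=
  @limf_esup R R^o R (fun t : R => (g t h)%:E) (pinfty_nbhs R).

From mathcomp Require Import all_boot all_order all_algebra.
From mathcomp Require Import all_classical all_reals all_analysis.
From mathcomp Require Import ring lra.
Import Order.TTheory GRing.Theory Num.Theory.
Local Open Scope classical_set_scope.
Local Open Scope ring_scope.

(* Write a(h) = limsup_{t -> oo} g(t,h)/h.  Iterating quasi-additivity along
   t, t + h, t + 2h, ... and interpolating by monotonicity in h, an eventual
   bound g(s,h) <= K becomes g(s,x) <= (K + S) x/h + |K + S| for all x > 0,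
   uniformly in large s; dually for lower bounds.  Hence a(h) + S/h dominates
   a(x) for large x, so a converges to the infimum of a(h) + S/h over h > 0.
   The same uniform bound dominates limsup_{h -> oo} g(t,h)/h, which does not
   depend on t > t0 because g(t + d, k) and g(t, d + k) differ by a bounded
   amount.  Finally g >= -S, and an eventual bound on g(., h) for one h
   propagates to every h, which gives (iii). *)

Section limf_esup_near.
Context {T : choiceType} {X : filteredType T} {R : realType}.
Variable F : set_system X.
Implicit Types f : X -> \bar R.
Local Open Scope ereal_scope.

Lemma limf_esup_le_near f (e : \bar R) :
  (\forall x \near F, f x <= e) -> limf_esup f F <= e.
Proof.
move=> Fe; rewrite limf_esupE; apply: ge_ereal_inf.
exists (ereal_sup (f @` [set x | f x <= e])); first by exists [set x | f x <= e].
by apply: ge_ereal_sup => _ [x + <-].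
Qed.

Lemma limf_esup_lt_near f {FF : Filter F} (e : \bar R) :
  limf_esup f F < e -> \forall x \near F, f x < e.
Proof.
rewrite limf_esupE => /ereal_inf_lt[_ [V FV <-]] Ve.
apply: filterS FV => x Vx; apply: le_lt_trans Ve.
by apply: ereal_sup_ubound; exists x.
Qed.

Lemma limf_esup_ge_near f {FF : ProperFilter F} (e : \bar R) :
  (\forall x \near F, e <= f x) -> e <= limf_esup f F.
Proof.
move=> Fe; rewrite limf_esupE; apply: le_ereal_inf_tmp => _ [V FV <-].
have [x [Vx ex]] := filter_ex (filterI FV Fe).
by apply: le_ereal_sup_tmp; exists (f x) => //; exists x.
Qed.

Lemma limf_einf_ge_near f {FF : Filter F} (e : \bar R) :
  (\forall x \near F, e <= f x) -> e <= limf_einf f F.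
Proof.
move=> Fe; rewrite /limf_einf leeNr; apply: limf_esup_le_near.
by apply: filterS Fe => x; rewrite leeN2.
Qed.

Lemma limf_einf_gt_near f {FF : Filter F} (e : \bar R) :
  e < limf_einf f F -> \forall x \near F, e < f x.
Proof.
rewrite /limf_einf lteNr => /limf_esup_lt_near; apply: filterS => x /=.
by rewrite lteN2.
Qed.

End limf_esup_near.

Section ereal_real_bounds.
Context {R : realType}.
Local Open Scope ereal_scope.
Implicit Types x y : \bar R.

Lemma ereal_lt_dense x y : x < y -> exists r : R, x < r%:E < y.
Proof.
case: x => [a| |]; case: y => [b| |] //= xy.
- by rewrite lte_fin in xy; exists ((a + b) / 2)%R; rewrite !lte_fin; apply/andP; split; lra.
- by exists (a + 1)%R; rewrite lte_fin ltry andbT; lra.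
- by exists (b - 1)%R; rewrite lte_fin ltNyr /=; lra.
- by exists 0%R; rewrite ltNyr ltry.
Qed.

Lemma lee_real_ub x y : (forall M : R, y < M%:E -> x <= M%:E) -> x <= y.
Proof.
case: y => [r| |] xM; last 2 first.
- by rewrite leey.
- case: x xM => [a| |] xM //; last by have := xM 0%R (ltNyr _).
  by have := xM (a - 1)%R (ltNyr _); rewrite lee_fin => ?; exfalso; lra.
apply/lee_addgt0Pr => e e0; apply: xM; rewrite lte_fin; lra.
Qed.

Lemma lee_real_lb x y : (forall M : R, M%:E < x -> M%:E <= y) -> x <= y.
Proof.
move=> Mxy; rewrite -leeN2; apply: lee_real_ub => M MH.
by rewrite leeNl -EFinN; apply: Mxy; rewrite EFinN lteNl.
Qed.

Lemma cvge_real_bounds (T : Type) (F : set_system T) {FF : Filter F}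
    (f : T -> \bar R) (l : \bar R) :
  (forall M : R, M%:E < l -> \forall x \near F, M%:E <= f x) ->
  (forall M : R, l < M%:E -> \forall x \near F, f x <= M%:E) -> f @ F --> l.
Proof.
case: l => [r| |] lb ub; last 2 first.
- by apply/cvgeyPge => M; apply: lb; rewrite ltry.
- by apply/cvgeNyPle => M; apply: ub; rewrite ltNyr.
have near_r e : (0 < e)%R ->
    \forall x \near F, f x \is a fin_num /\ (`|r - fine (f x)| <= e)%R.
  move=> e0; apply: filterS2 (lb (r - e)%R _) (ub (r + e)%R _) => [x||].
  + case: (f x) => [y| |] lo hi; last by rewrite leeNy_eq in lo.
      by rewrite !lee_fin in lo hi; split=> //=; rewrite ler_norml; apply/andP; split; lra.
    by rewrite leye_eq in hi.
  + by rewrite lte_fin; lra.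
  + by rewrite lte_fin; lra.
apply/fine_cvgP; split; first by apply: filterS (near_r 1%R ltr01) => x [].
apply/cvgrPdist_lt => e e0; have e20 : (0 < e / 2)%R by lra.
by apply: filterS (near_r _ e20) => x [_ /= ?]; lra.
Qed.

End ereal_real_bounds.

Section near_pinfty.
Context {R : realType}.

Lemma near_pinfty_div_lt (c e : R) : 0 < e -> \forall x \near +oo, 0 < x /\ c / x < e.
Proof.
move=> e0; near=> x.
have x0 : 0 < x by near: x; apply: nbhs_pinfty_gt; exact: num_real.
split; rewrite // ltr_pdivrMr // -ltr_pdivrMl //.
by near: x; apply: nbhs_pinfty_gt; exact: num_real.
Unshelve. all: by end_near.
Qed.

Lemma near_pinfty_ratio_lt {a b : R} (d : R) : a < b ->
  \forall x \near +oo, 0 < x /\ forall y, y <= a * x + d -> y / x < b.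
Proof.
move=> ab; have : 0 < b - a by lra.
move=> /(near_pinfty_div_lt d); apply: filterS => x [x0 dx]; split=> // y yx.
by rewrite ltr_pdivrMr // in dx; rewrite ltr_pdivrMr //; lra.
Qed.

Lemma near_pinfty_ratio_gt {a b : R} (d : R) : b < a ->
  \forall x \near +oo, 0 < x /\ forall y, a * x - d <= y -> b < y / x.
Proof.
move=> ba; have : 0 < a - b by lra.
move=> /(near_pinfty_div_lt d); apply: filterS => x [x0 dx]; split=> // y yx.
by rewrite ltr_pdivrMr // in dx; rewrite ltr_pdivlMr //; lra.
Qed.

Lemma near_pinfty_shift {P : R -> Prop} (d : R) :
  (\forall x \near +oo, P x) -> \forall x \near +oo, P (x + d).
Proof.
move=> [M [_ PM]]; exists (M - d); split; first exact: num_real.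
by move=> x Mx; apply: PM; lra.
Qed.

End near_pinfty.

Definition ubounded_near {R : realType} (f : R -> R) : Prop :=
  exists c : R, \forall t \near +oo, f t <= c.

Section ratio_limits.
Context {R : realType} (g : R -> R -> R).

Lemma limsup_h_ratio_le_affine t (a c : R) :
  (\forall k \near +oo, g t k <= a * k + c) -> (limsup_h_ratio g t <= a%:E)%E.
Proof.
move=> gk; apply: lee_real_ub => M; rewrite lte_fin => aM.
apply: limf_esup_le_near.
apply: filterS2 gk (near_pinfty_ratio_lt c aM) => k gk [_ lt].
by rewrite lee_fin ltW // lt.
Qed.

Lemma limsup_h_ratio_lt t (a : R) :
  (limsup_h_ratio g t < a%:E)%E -> \forall k \near +oo, g t k <= a * k.
Proof.
move=> /limf_esup_lt_near; apply: filterS2 (nbhs_pinfty_gt (num_real 0)) => k k0.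
by rewrite lte_fin ltr_pdivrMr // => /ltW.
Qed.

Lemma liminf_h_ratio_ge_affine t (a c : R) :
  (\forall k \near +oo, a * k - c <= g t k) -> (a%:E <= liminf_h_ratio g t)%E.
Proof.
move=> gk; apply: lee_real_lb => M; rewrite lte_fin => Ma.
apply: limf_einf_ge_near.
apply: filterS2 gk (near_pinfty_ratio_gt c Ma) => k gk [_ gt].
by rewrite lee_fin ltW // gt.
Qed.

Lemma liminf_h_ratio_gt t (a : R) :
  (a%:E < liminf_h_ratio g t)%E -> \forall k \near +oo, a * k <= g t k.
Proof.
move=> /limf_einf_gt_near; apply: filterS2 (nbhs_pinfty_gt (num_real 0)) => k k0.
by rewrite lte_fin ltr_pdivlMr // => /ltW.
Qed.

Lemma limsup_t_ratio_le h c : 0 < h ->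
  (\forall t \near +oo, g t h <= c) -> (limsup_t_ratio g h <= (c / h)%:E)%E.
Proof.
move=> h0 gc; apply: limf_esup_le_near; apply: filterS gc => t gtc.
by rewrite lee_fin ler_pdivrMr // divfK ?gt_eqF.
Qed.

Lemma limsup_t_ratio_pinfty h : 0 < h ->
  ~ ubounded_near (g^~ h) -> limsup_t_ratio g h = +oo%E.
Proof.
move=> h0 unb; apply/eqP; rewrite eq_le leey /=; apply: lee_real_lb => M _.
rewrite leNgt; apply/negP => /limf_esup_lt_near gM; apply: unb.
by exists (M * h); apply: filterS gM => t; rewrite lte_fin ltr_pdivrMr // => /ltW.
Qed.

End ratio_limits.

Definition upper_rate {R : realType} (g : R -> R -> R) (S : R) : \bar R :=
  ereal_inf [set (limsup_t_ratio g h + (S / h)%:E)%E | h in [set h | 0 < h]].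

Definition lower_rate {R : realType} (g : R -> R -> R) (S : R) : \bar R :=
  ereal_sup [set (liminf_t_ratio g h - (S / h)%:E)%E | h in [set h | 0 < h]].

Lemma dist_mulr_le (R : realDomainType) (N q c : R) :
  `|N - q| <= 1 -> `|N * c - q * c| <= `|c|.
Proof. by move=> Nq; rewrite -mulrBl normrM ler_piMl. Qed.

Section quasi_additive.
Context {R : realType} {g : R -> R -> R} {T S : R}.
Hypothesis g_nondecr :
  forall t h h', T < t -> 0 <= h -> h <= h' -> g t h <= g t h'.
Hypothesis g_qadd : forall t h k, T < t -> 0 < h -> 0 < k ->
  `|g t (h + k) - g (t + h) k - g t h| <= S.

Lemma S_ge0 : 0 <= S.
Proof. by apply: le_trans (normr_ge0 _) (g_qadd (T + 1) 1 1 _ _ _); lra. Qed.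

Lemma g_addr_le t h k : T < t -> 0 < h -> 0 < k ->
  g t (h + k) <= g t h + g (t + h) k + S.
Proof.
move=> Tt h0 k0; have := g_qadd t h k Tt h0 k0.
by rewrite ler_norml => /andP[_]; lra.
Qed.

Lemma g_addr_ge t h k : T < t -> 0 < h -> 0 < k ->
  g t h + g (t + h) k - S <= g t (h + k).
Proof.
move=> Tt h0 k0; have := g_qadd t h k Tt h0 k0.
by rewrite ler_norml => /andP[]; lra.
Qed.

Lemma g_ge_oppS s k : T < s -> 0 < k -> - S <= g s k.
Proof.
move=> Ts k0; pose u := (T + s) / 2.
have Tu : T < u by rewrite /u; lra.
have su : 0 < s - u by rewrite /u; lra.
have := g_addr_le u (s - u) k Tu su k0; rewrite [u + _]addrC subrK.
have : g u (s - u) <= g u (s - u + k) by apply: g_nondecr; lra.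
lra.
Qed.

Lemma g_natmul_le h K s n : 0 < h -> T < s ->
    (forall s', s <= s' -> g s' h <= K) ->
  g s (n.+1%:R * h) <= n.+1%:R * (K + S) - S.
Proof.
move=> h0; elim: n s => [|n IH] s Ts gK.
  by rewrite !mul1r; have := gK s (lexx s); lra.
have nh0 : 0 < n.+1%:R * h by rewrite mulr_gt0.
rewrite -[n.+2%:R]natr1 !mulrDl !mul1r [_ * h + h]addrC.
have := IH (s + h) ltac:(lra) (fun s' ss' => gK s' ltac:(lra)).
have := g_addr_le s h _ Ts h0 nh0; have := gK s (lexx s).
lra.
Qed.

Lemma g_natmul_ge h K s n : 0 < h -> T < s ->
    (forall s', s <= s' -> K <= g s' h) ->
  n.+1%:R * (K - S) + S <= g s (n.+1%:R * h).
Proof.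
move=> h0; elim: n s => [|n IH] s Ts gK.
  by rewrite !mul1r; have := gK s (lexx s); lra.
have nh0 : 0 < n.+1%:R * h by rewrite mulr_gt0.
rewrite -[n.+2%:R]natr1 !mulrDl !mul1r [_ * h + h]addrC.
have := IH (s + h) ltac:(lra) (fun s' ss' => gK s' ltac:(lra)).
have := g_addr_ge s h _ Ts h0 nh0; have := gK s (lexx s).
lra.
Qed.

Lemma g_le_affine h K s x : 0 < h -> T < s ->
    (forall s', s <= s' -> g s' h <= K) -> 0 < x ->
  g s x <= (K + S) * (x / h) + `|K + S|.
Proof.
move=> h0 Ts gK x0; have q0 : 0 <= x / h by rewrite divr_ge0 // ltW.
have /andP[nq qn] := truncn_itv q0; set n := Num.truncn _ in nq qn.
have xn : x <= n.+1%:R * h by rewrite -ler_pdivrMr // ltW.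
have : `|n.+1%:R * (K + S) - x / h * (K + S)| <= `|K + S|.
  by apply: dist_mulr_le; rewrite -natr1 in qn *; rewrite ler_norml; lra.
rewrite ler_norml => /andP[_ ?].
have := g_natmul_le h K s n h0 Ts gK; have := S_ge0.
have : g s x <= g s (n.+1%:R * h) by apply: g_nondecr; lra.
lra.
Qed.

Lemma g_ge_affine h K s x : 0 < h -> T < s ->
    (forall s', s <= s' -> K <= g s' h) -> h <= x ->
  (K - S) * (x / h) - `|K - S| <= g s x.
Proof.
move=> h0 Ts gK hx; have q1 : 1 <= x / h by rewrite ler_pdivlMr // mul1r.
have /andP[] := truncn_itv (le_trans ler01 q1).
case: (Num.truncn (x / h)) => [_|n nq qn]; first by rewrite mulr1n; lra.
have nx : n.+1%:R * h <= x by rewrite -ler_pdivlMr.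
have : `|n.+1%:R * (K - S) - x / h * (K - S)| <= `|K - S|.
  by apply: dist_mulr_le; rewrite -natr1 in qn; rewrite ler_norml; lra.
rewrite ler_norml => /andP[? _].
have := g_natmul_ge h K s n h0 Ts gK; have := S_ge0.
have : g s (n.+1%:R * h) <= g s x.
  by apply: g_nondecr => //; rewrite mulr_ge0 // ltW.
lra.
Qed.

Lemma upper_rate_affine_ub (M : R) : (upper_rate g S < M%:E)%E ->
  exists2 M1 : R, M1 < M & exists d T', forall s x, T' < s -> 0 < x ->
    g s x <= M1 * x + d.
Proof.
move=> /ereal_inf_lt[_ [h h0 <-]] /ereal_lt_dense[M1 /andP[hM1 M1M]].
exists M1; first by rewrite -lte_fin.
move: hM1; rewrite -lteBrDr // -EFinB => /limf_esup_lt_near[T' [_ gh]].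
exists `|M1 * h|, (Num.max T T') => s x; rewrite gt_max => /andP[Ts T's] x0.
have gK s' : s <= s' -> g s' h <= M1 * h - S.
  move=> ss'; have := gh s' (lt_le_trans T's ss').
  by rewrite lte_fin ltr_pdivrMr // mulrBl divfK ?gt_eqF // => /ltW.
have := g_le_affine h (M1 * h - S) s x h0 Ts gK x0; rewrite subrK.
by have -> : M1 * h * (x / h) = M1 * x by field; rewrite gt_eqF.
Qed.

Lemma lower_rate_affine_lb (M : R) : (M%:E < lower_rate g S)%E ->
  exists2 M1 : R, M < M1 & exists d T' x0, forall s x, T' < s -> x0 <= x ->
    M1 * x - d <= g s x.
Proof.
move=> /ereal_sup_gt[_ [h h0 <-]] /ereal_lt_dense[M1 /andP[MM1 hM1]].
exists M1; first by rewrite -lte_fin.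
move: hM1; rewrite lteBrDr // -EFinD => /limf_einf_gt_near[T' [_ gh]].
exists `|M1 * h|, (Num.max T T'), h => s x; rewrite gt_max => /andP[Ts T's] hx.
have gK s' : s <= s' -> M1 * h + S <= g s' h.
  move=> ss'; have := gh s' (lt_le_trans T's ss').
  by rewrite lte_fin ltr_pdivlMr // mulrDl divfK ?gt_eqF // => /ltW.
have := g_ge_affine h (M1 * h + S) s x h0 Ts gK hx; rewrite addrK.
by have -> : M1 * h * (x / h) = M1 * x by field; rewrite gt_eqF.
Qed.

Lemma cvg_upper_rate :
  (fun h => limsup_t_ratio g h) @ pinfty_nbhs R --> upper_rate g S.
Proof.
apply: cvge_real_bounds => M.
- move=> /ereal_lt_dense[M' /andP[MM' M'l]].
  have : 0 < M' - M by rewrite subr_gt0 -lte_fin.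
  move=> /(near_pinfty_div_lt S); apply: filterS => h [h0 Sh].
  have : (upper_rate g S <= limsup_t_ratio g h + (S / h)%:E)%E.
    by apply: ereal_inf_lbound; exists h.
  move=> /(lt_le_trans M'l); rewrite -lteBlDr // -EFinB => /ltW; apply: le_trans.
  by rewrite lee_fin; lra.
- move=> /upper_rate_affine_ub[M1 M1M [d [T' gM1]]].
  apply: filterS (near_pinfty_ratio_lt d M1M) => x [x0 ratio_lt].
  apply: limf_esup_le_near; exists T'; split; first exact: num_real.
  by move=> t T't; rewrite lee_fin ltW // ratio_lt // gM1.
Qed.

Lemma cvg_lower_rate :
  (fun h => liminf_t_ratio g h) @ pinfty_nbhs R --> lower_rate g S.
Proof.
apply: cvge_real_bounds => M.
- move=> /lower_rate_affine_lb[M1 MM1 [d [T' [x0 gM1]]]].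
  apply: filterS2 (near_pinfty_ratio_gt d MM1) (nbhs_pinfty_ge (num_real x0)).
  move=> x [_ ratio_gt] x0x.
  apply: limf_einf_ge_near; exists T'; split; first exact: num_real.
  by move=> t T't; rewrite lee_fin ltW // ratio_gt // gM1.
- move=> /ereal_lt_dense[M' /andP[lM' M'M]].
  have : 0 < M - M' by rewrite subr_gt0 -lte_fin.
  move=> /(near_pinfty_div_lt S); apply: filterS => h [h0 Sh].
  have : (liminf_t_ratio g h - (S / h)%:E <= lower_rate g S)%E.
    by apply: ereal_sup_ubound; exists h.
  move=> /le_lt_trans /(_ lM'); rewrite lteBlDr // -EFinD => /ltW /le_trans; apply.
  by rewrite lee_fin; lra.
Qed.

Lemma limsup_h_ratio_shift t d : T < t -> 0 < d ->
  limsup_h_ratio g (t + d) = limsup_h_ratio g t.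
Proof.
move=> Tt d0; apply/eqP; rewrite eq_le; apply/andP; split;
  apply: lee_real_ub => M /limsup_h_ratio_lt gM.
- apply: (limsup_h_ratio_le_affine g _ M (M * d - g t d + S)).
  apply: filterS2 (near_pinfty_shift d gM) (nbhs_pinfty_gt (num_real 0)) => k gk k0.
  by have := g_addr_ge t d k Tt d0 k0; rewrite [d + k]addrC; lra.
- apply: (limsup_h_ratio_le_affine g _ M (g t d + S)).
  apply: filterS2 gM (nbhs_pinfty_gt (num_real 0)) => k gk k0.
  have := g_addr_le t d k Tt d0 k0.
  have : g t k <= g t (d + k) by apply: g_nondecr; lra.
  lra.
Qed.

Lemma liminf_h_ratio_shift t d : T < t -> 0 < d ->
  liminf_h_ratio g (t + d) = liminf_h_ratio g t.
Proof.
move=> Tt d0; apply/eqP; rewrite eq_le; apply/andP; split;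
  apply: lee_real_lb => M /liminf_h_ratio_gt gM.
- apply: (liminf_h_ratio_ge_affine g _ M (M * d - g t d + S)).
  apply: filterS2 (near_pinfty_shift (- d) gM) (nbhs_pinfty_gt (num_real d)).
  move=> k gk dk; have kd0 : 0 < k - d by lra.
  by have := g_addr_ge t d (k - d) Tt d0 kd0; rewrite subrKC; lra.
- apply: (liminf_h_ratio_ge_affine g _ M (g t d + S - M * d)).
  apply: filterS2 (near_pinfty_shift d gM) (nbhs_pinfty_gt (num_real 0)) => k gk k0.
  by have := g_addr_le t d k Tt d0 k0; rewrite [d + k]addrC; lra.
Qed.

Lemma limsup_h_ratio_const t t' : T < t -> t < t' ->
  limsup_h_ratio g t' = limsup_h_ratio g t.
Proof.
move=> Tt tt'; rewrite -(subrKC t t') limsup_h_ratio_shift //.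
by rewrite subr_gt0.
Qed.

Lemma liminf_h_ratio_const t t' : T < t -> t < t' ->
  liminf_h_ratio g t' = liminf_h_ratio g t.
Proof.
move=> Tt tt'; rewrite -(subrKC t t') liminf_h_ratio_shift //.
by rewrite subr_gt0.
Qed.

Lemma cvg_limsup_h_ratio :
  (fun t => limsup_h_ratio g t) @ pinfty_nbhs R --> limsup_h_ratio g (T + 1).
Proof.
apply: cvg_near_cst; exists (T + 1); split; first exact: num_real.
by move=> t tT; apply: limsup_h_ratio_const => //; lra.
Qed.

Lemma cvg_liminf_h_ratio :
  (fun t => liminf_h_ratio g t) @ pinfty_nbhs R --> liminf_h_ratio g (T + 1).
Proof.
apply: cvg_near_cst; exists (T + 1); split; first exact: num_real.
by move=> t tT; apply: liminf_h_ratio_const => //; lra.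
Qed.

Lemma limsup_h_ratio_le_upper_rate t : T < t ->
  (limsup_h_ratio g t <= upper_rate g S)%E.
Proof.
move=> Tt; apply: lee_real_ub => M /upper_rate_affine_ub[M1 M1M [d [T' gM1]]].
have tm : t <= Num.max t T' by rewrite le_max lexx.
have T'm : T' <= Num.max t T' by rewrite le_max lexx orbT.
rewrite -(limsup_h_ratio_const _ (Num.max t T' + 1) Tt); last by lra.
apply: le_trans (limsup_h_ratio_le_affine g _ M1 d _) _.
  by apply: filterS (nbhs_pinfty_gt (num_real 0)) => x x0; apply: gM1 => //; lra.
by rewrite lee_fin ltW.
Qed.

Lemma lower_rate_le_liminf_h_ratio t : T < t ->
  (lower_rate g S <= liminf_h_ratio g t)%E.
Proof.
move=> Tt; apply: lee_real_lb => M /lower_rate_affine_lb[M1 MM1 [d [T' [x0 gM1]]]].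
have tm : t <= Num.max t T' by rewrite le_max lexx.
have T'm : T' <= Num.max t T' by rewrite le_max lexx orbT.
rewrite -(liminf_h_ratio_const _ (Num.max t T' + 1) Tt); last by lra.
apply: le_trans (liminf_h_ratio_ge_affine g _ M1 d _); first by rewrite lee_fin ltW.
by apply: filterS (nbhs_pinfty_ge (num_real x0)) => x x0x; apply: gM1 => //; lra.
Qed.

Lemma limsup_t_fin_numP h : 0 < h ->
  limsup_t g h \is a fin_num <-> ubounded_near (g^~ h).
Proof.
move=> h0; have lb : ((- S)%:E <= limsup_t g h)%E.
  apply: limf_esup_ge_near; exists T; split; first exact: num_real.
  by move=> t Tt; rewrite lee_fin g_ge_oppS.
split=> [fin|[c gc]].
- exists (fine (limsup_t g h) + 1).
  have : (limsup_t g h < (fine (limsup_t g h) + 1)%:E)%E.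
    by rewrite -{1}(fineK fin) lte_fin ltrDl.
  by move=> /limf_esup_lt_near; apply: filterS => t /ltW; rewrite lee_fin.
- have : (limsup_t g h <= c%:E)%E.
    by apply: limf_esup_le_near; apply: filterS gc => t; rewrite lee_fin.
  by move: lb; case: (limsup_t g h).
Qed.

Lemma ubounded_near_transfer h x : 0 < h -> 0 < x ->
  ubounded_near (g^~ h) -> ubounded_near (g^~ x).
Proof.
move=> h0 x0 [c [T' [_ gc]]].
exists ((c + S) * (x / h) + `|c + S|), (Num.max T T'); split; first exact: num_real.
move=> t; rewrite gt_max => /andP[Tt T't]; apply: g_le_affine => // s ts.
by apply: gc; apply: lt_le_trans ts.
Qed.

Lemma upper_rate_ge0 : (0 <= upper_rate g S)%E.
Proof.
apply: le_ereal_inf_tmp => _ [h h0 <-]; rewrite -leeBlDr // sub0e -EFinN.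
apply: limf_esup_ge_near; exists T; split; first exact: num_real.
by move=> t Tt; rewrite lee_fin ler_pdivlMr // mulNr divfK ?gt_eqF // g_ge_oppS.
Qed.

Lemma upper_rate_fin_numP : upper_rate g S \is a fin_num <-> ubounded_near (g^~ 1).
Proof.
split=> [fin|[c gc]].
- apply: contrapT => unb; move: fin; suff -> : upper_rate g S = +oo%E by [].
  apply/ereal_inf_pinfty => _ [h h0 <-]; rewrite limsup_t_ratio_pinfty //.
  by move=> gh; apply: unb; apply: ubounded_near_transfer gh.
- have : (upper_rate g S <= limsup_t_ratio g 1 + (S / 1)%:E)%E.
    by apply: ereal_inf_lbound; exists 1 => //=; exact: ltr01.
  move/le_trans/(_ (leeD2r _ (limsup_t_ratio_le g _ _ ltr01 gc))).
  by move: upper_rate_ge0; case: (upper_rate g S).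
Qed.

Lemma limsup_t_fin_numP1 h : 0 < h ->
  limsup_t g h \is a fin_num <-> ubounded_near (g^~ 1).
Proof.
move=> h0; split=> [/(limsup_t_fin_numP h h0)|gb]; first exact: ubounded_near_transfer.
by apply/(limsup_t_fin_numP h h0); apply: ubounded_near_transfer gb.
Qed.

Lemma upper_rate_infinite_exists : upper_rate g S \isn't a fin_num <->
  exists h, 0 < h /\ limsup_t g h \isn't a fin_num.
Proof.
split=> [inf|[h [h0 inf]]].
- exists 1; split=> //; apply: contra inf => fin1.
  by apply/upper_rate_fin_numP/(limsup_t_fin_numP1 1 ltr01).
- by apply: contra inf => /upper_rate_fin_numP /(limsup_t_fin_numP1 h h0).
Qed.

Lemma upper_rate_infinite_forall : upper_rate g S \isn't a fin_num <->
  forall h, 0 < h -> limsup_t g h \isn't a fin_num.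
Proof.
split=> [inf h h0|inf].
- by apply: contra inf => /(limsup_t_fin_numP1 h h0) /upper_rate_fin_numP.
- by apply: contra (inf 1 ltr01) => /upper_rate_fin_numP /(limsup_t_fin_numP1 1 ltr01).
Qed.

End quasi_additive.

Local Open Scope ereal_scope.

Theorem proposition5p2 (R : realType) (g : R -> R -> R) (t0 : R) :
  (* g is non-decreasing in the second variable on (0,oo) x [0,oo) *)
  (forall t h h' : R, (0 < t)%R -> (0 <= h)%R -> (h <= h')%R -> (g t h <= g t h')%R) ->
  (* S = sup_{t > t0, h, k > 0} |g(t,h+k) - g(t+h,k) - g(t,h)| < oo *)
  (exists S : R, forall t h k : R, (t0 < t)%R -> (0 < t)%R -> (0 < h)%R -> (0 < k)%R ->
      (`| g t (h + k) - g (t + h) k - g t h | <= S)%R) ->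
  exists lsup linf : \bar R,
    (* (i) *)
    ((fun h => limsup_t_ratio g h) @ pinfty_nbhs R --> lsup) /\
    ((fun h => liminf_t_ratio g h) @ pinfty_nbhs R --> linf) /\
    (* (ii) *)
    (exists l1 : \bar R,
        ((fun t => limsup_h_ratio g t) @ pinfty_nbhs R --> l1) /\ l1 <= lsup) /\
    (exists l2 : \bar R,
        ((fun t => liminf_h_ratio g t) @ pinfty_nbhs R --> l2) /\ linf <= l2) /\
    (* (iii) *)
    ((lsup \isn't a fin_num) <->
       (exists h : R, (0 < h)%R /\ limsup_t g h \isn't a fin_num)) /\
    ((lsup \isn't a fin_num) <->
       (forall h : R, (0 < h)%R -> limsup_t g h \isn't a fin_num)).
Proof.
move=> g_nondecr [S g_qadd]; pose T := Num.max t0 0%R.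
have g_nondecrT t h h' : (T < t)%R -> (0 <= h)%R -> (h <= h')%R -> (g t h <= g t h')%R.
  by rewrite gt_max => /andP[_]; exact: g_nondecr.
have g_qaddT t h k : (T < t)%R -> (0 < h)%R -> (0 < k)%R ->
    (`|g t (h + k) - g (t + h) k - g t h| <= S)%R.
  by rewrite gt_max => /andP[]; exact: g_qadd.
have TT : (T < T + 1)%R by rewrite ltrDl.
exists (upper_rate g S), (lower_rate g S); split; last split.
- exact: cvg_upper_rate g_nondecrT g_qaddT.
- exact: cvg_lower_rate g_nondecrT g_qaddT.
split; last split; last split.
- exists (limsup_h_ratio g (T + 1)); split.
    exact: cvg_limsup_h_ratio g_nondecrT g_qaddT.
  exact: limsup_h_ratio_le_upper_rate g_nondecrT g_qaddT _ TT.
- exists (liminf_h_ratio g (T + 1)); split.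
    exact: cvg_liminf_h_ratio g_qaddT.
  exact: lower_rate_le_liminf_h_ratio g_nondecrT g_qaddT _ TT.
- exact: upper_rate_infinite_exists g_nondecrT g_qaddT.
- exact: upper_rate_infinite_forall g_nondecrT g_qaddT.
Qed.
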